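(* Let $\Phi=(A;A^*;\{E_i\}_{i=0}^d;\{E^*_i\}_{i=0}^d)$ be a Leonard system in $\mathcal A$ with eigenvalue sequence $\theta_0,\dots,\theta_d$, dual eigenvalue sequence $\theta^*_0,\dots,\theta^*_d$, first split sequence $\varphi_1,\dots,\varphi_d$ and second split sequence $\phi_1,\dots,\phi_d$, and let $k_i=\nu\,\mathrm{tr}(E^*_iE_0)$. Then $$k_i=\frac{\varphi_1\varphi_2\cdots\varphi_i}{\phi_1\phi_2\cdots\phi_i}\cdot\frac{\eta^*_d(\theta^*_0)}{\tau^*_i(\theta^*_i)\,\eta^*_{d-i}(\theta^*_i)}\qquad(0\le i\le d).$$
   Context: Let $\mathbb K$ be a field, $d\ge 0$ an integer, and $\mathcal A$ a $\mathbb K$-algebra isomorphic to the full matrix algebra $\mathrm{Mat}_{d+1}(\mathbb K)$; $I$ is its identity. An element of $\mathcal A$ is multiplicity-free if it has $d+1$ mutually distinct eigenvalues in $\mathbb K$. If $A$ is multiplicity-free with eigenvalues $\theta_0,\dots,\theta_d$, the primitive idempotent of $A$ associated with $\theta_i$ is $E_i=\prod_{j\ne i}(A-\theta_jI)/(\theta_i-\theta_j)$. A Leonard system in $\mathcal A$ is a sequence $\Phi=(A;A^*;\{E_i\}_{i=0}^d;\{E^*_i\}_{i=0}^d)$ such that (i) $A,A^*\in\mathcal A$ are multiplicity-free; (ii) $E_0,\dots,E_d$ is an ordering of the primitive idempotents of $A$; (iii) $E^*_0,\dots,E^*_d$ is an ordering of the primitive idempotents of $A^*$; (iv) $E_iA^*E_j=0$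 if $|i-j|>1$ and $E_iA^*E_j\ne0$ if $|i-j|=1$ ($0\le i,j\le d$); (v) $E^*_iAE^*_j=0$ if $|i-j|>1$ and $E^*_iAE^*_j\ne0$ if $|i-j|=1$ ($0\le i,j\le d$). Here $A^*$ is merely notation (not an adjoint). $\theta_i$ (resp. $\theta^*_i$) is the eigenvalue of $A$ (resp. $A^*$) associated with $E_i$ (resp. $E^*_i$). The scalar $\mathrm{tr}(E_0E^*_0)$ is nonzero and $\nu$ is its inverse. First split sequence of a Leonard system $\Psi=(B;B^*;\{F_i\};\{F^*_i\})$ with eigenvalues $\sigma_i$ (for $F_i$) and dual eigenvalues $\sigma^*_i$ (for $F^*_i$): on an irreducible module $V$, $U_i=(F^*_0V+\cdots+F^*_iV)\cap(F_iV+\cdots+F_dV)$ is $1$-dimensional and, for $1\le i\le d$, an eigenspace of $(B-\sigma_{i-1}I)(B^*-\sigma^*_iI)$ with nonzero eigenvalue, denoted $\varphi_i(\Psi)$. The first split sequence of $\Phi$ is $\varphi_i=\varphi_i(\Phi)$; the second split sequence is $\phi_i=\varphi_i(\Phi^{\Downarrow})$, where $\Phi^{\Downarrow}=(A;A^*;\{E_{d-i}\}_{i=0}^d;\{E^*_i\}_{i=0}^d)$ (also a Leonard system). Polynomials: $\tau^*_i=\prod_{h=0}^{i-1}(\lambda-\theta^*_h)$, $\eta^*_i=\prod_{h=0}^{i-1}(\lambda-\theta^*_{d-h})$ (empty products $=1$). *)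

From HB Require Import structures.
From mathcomp Require Import all_boot all_order all_algebra.
Set Implicit Arguments. Unset Strict Implicit. Unset Printing Implicit Defensive.
Import GRing.Theory.
Local Open Scope ring_scope.

(* The algebra is modelled by 'M[K]_(d.+1) itself (A is isomorphic to it;
   all notions below are invariant under algebra isomorphism).
   Sequences indexed by 0..d are functions nat -> K (values beyond d unused). *)

Section Leonard.
Variables (K : fieldType) (d : nat).
Local Notation M := 'M[K]_(d.+1).

Definition prim_idem (A : M) (th : nat -> K) (i : nat) : M :=
  \prod_(j < d.+1 | (j : nat) != i) ((th i - th j)^-1 *: (A - (th j)%:M)).

Definition eig_ordering (A : M) (th : nat -> K) : Prop :=
  (forall i j, (i <= d)%N -> (j <= d)%N -> th i = th j -> i = j) /\
  (forall i, (i <= d)%N -> eigenvalue A (th i)).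

Definition leonard_system (A As : M) (th ths : nat -> K) : Prop :=
  [/\ eig_ordering A th /\ eig_ordering As ths,
      (forall i j, (i <= d)%N -> (j <= d)%N ->
         ((j.+1 < i)%N || (i.+1 < j)%N) ->
         prim_idem A th i *m As *m prim_idem A th j = 0),
      (forall i j, (i <= d)%N -> (j <= d)%N ->
         ((j.+1 == i) || (i.+1 == j)) ->
         prim_idem A th i *m As *m prim_idem A th j != 0),
      (forall i j, (i <= d)%N -> (j <= d)%N ->
         ((j.+1 < i)%N || (i.+1 < j)%N) ->
         prim_idem As ths i *m A *m prim_idem As ths j = 0) &
      (forall i j, (i <= d)%N -> (j <= d)%N ->
         ((j.+1 == i) || (i.+1 == j)) ->
         prim_idem As ths i *m A *m prim_idem As ths j != 0)].

(* V = K^(d+1) as column vectors; a column vector v is encoded by the row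
   vector v^T, so the column space X V of a matrix X is the row space of X^T,
   and X v corresponds to v^T *m X^T. *)
Definition split_U (B Bs : M) (sg sgs : nat -> K) (i : nat) : 'M[K]_(d.+1) :=
  ((\sum_(j < d.+1 | (j <= i)%N) (prim_idem Bs sgs j)^T)
   :&: (\sum_(j < d.+1 | (i <= j)%N) (prim_idem B sg j)^T))%MS.

Definition first_split_seq (B Bs : M) (sg sgs : nat -> K) (phi : nat -> K) : Prop :=
  forall i, (1 <= i <= d)%N ->
    forall u : 'rV[K]_(d.+1), (u <= split_U B Bs sg sgs i)%MS ->
      u *m ((B - (sg i.-1)%:M) *m (Bs - (sgs i)%:M))^T = phi i *: u.

(* eigenvalue sequence of the Leonard system Phi^Downarrow *)
Definition rev_seq (th : nat -> K) : nat -> K := fun i => th (d - i)%N.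

Definition tau_s (ths : nat -> K) (i : nat) (x : K) : K :=
  \prod_(h < i) (x - ths h).
Definition eta_s (ths : nat -> K) (i : nat) (x : K) : K :=
  \prod_(h < i) (x - ths (d - h)%N).

End Leonard.

From mathcomp Require Import all_boot all_order all_algebra.
From mathcomp Require Import zify ring.
Set Implicit Arguments. Unset Strict Implicit. Unset Printing Implicit Defensive.
Import GRing.Theory.
Local Open Scope ring_scope.

(* Pass to transposes, so that the matrices act on row vectors.  Pick u0
   spanning E*_0 V.  The vectors u_k = u0 (A - theta_0) ... (A - theta_(k-1)) span
   the split spaces U_k (irreducibility of the Leonard pair and a rank count
   show that dim U_k = 1), and (A* - theta*_k) sends u_k to phi_k u_(k-1).  Doing
   the same with the reversed eigenvalue order gives vectors u'_k and psi_k.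
   Since u'_d spans E_0 V we may write E_0 = x u'_d, so
   tr(E*_i E_0) = u'_d E*_i x.  Factor E*_i as a scalar times
   prod_(h < d - i) (A* - theta*_(d-h)) prod_(h < i) (A* - theta*_h): the first
   product sends u'_d to psi_d ... psi_(i+1) u'_i; u'_i - u_i lies in
   E*_0 V + ... + E*_(i-1) V, which is killed by the second product applied
   to x; and that product sends u_i to phi_1 ... phi_i u_0.  Dividing the
   cases i and 0 gives the formula. *)

Lemma sum1_neq n (j : 'I_n.+1) : (\sum_(i < n.+1 | i != j) 1 = n)%N.
Proof. by rewrite (eq_bigl (mem (predC1 j))) // sum1_card cardC1 card_ord. Qed.

Lemma sum1_pred_le n (P : pred 'I_n.+1) (j : 'I_n.+1) : ~~ P j ->
  (\sum_(i < n.+1 | P i) 1 <= n)%N.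
Proof.
move=> nPj; rewrite -[X in (_ <= X)%N](sum1_neq j) big_mkcond [X in (_ <= X)%N]big_mkcond /=.
apply: leq_sum => i _; case: (eqVneq i j) => [->|_]; last by case: (P i).
by rewrite (negbTE nPj).
Qed.

Lemma sum1_split n i :
  (\sum_(j < n | (j <= i)%N) 1 + \sum_(j < n | (i < j)%N) 1 = n)%N.
Proof.
have all1 : (\sum_(j < n) 1 = n)%N by rewrite sum1_card card_ord.
rewrite (bigID (fun j : 'I_n => (j <= i)%N)) /= in all1; rewrite -[RHS]all1.
by congr (_ + _)%N; apply: eq_bigl => j; rewrite ltnNge.
Qed.

Section MatrixFacts.
Variables (K : fieldType) (n : nat).
Local Notation M := 'M[K]_n.+1.

Lemma mx_eq_rV (X Y : M) : (forall v : 'rV_n.+1, v *m X = v *m Y) -> X = Y.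
Proof. by move=> XY; apply/row_matrixP => i; rewrite !rowE XY. Qed.

Lemma mulmx_prod_eigen m (v : 'M[K]_(m, n.+1)) (I : Type) (r : seq I) (P : pred I)
    (f : I -> M) (s : I -> K) :
  (forall i, P i -> v *m f i = s i *: v) ->
  v *m \prod_(i <- r | P i) f i = (\prod_(i <- r | P i) s i) *: v.
Proof.
move=> vf; apply: (big_rec2 (fun (y : K) (X : M) => v *m X = y *: v)).
  by rewrite mulmx1 scale1r.
by move=> i y X Pi IH; rewrite -mulmxE mulmxA vf // -scalemxAl IH scalerA.
Qed.

Lemma horner_mx_XsubC (A : M) (c : K) : horner_mx A ('X - c%:P) = A - c%:M.
Proof. by rewrite rmorphB /= horner_mx_X horner_mx_C. Qed.

Lemma trmx_horner_mx (A : M) (p : {poly K}) : (horner_mx A p)^T = horner_mx A^T p.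
Proof.
elim/poly_ind: p => [|p c IH]; first by rewrite !rmorph0 trmx0.
rewrite !rmorphD !rmorphM /= !horner_mx_X !horner_mx_C linearD /= tr_scalar_mx.
rewrite -mulmxE trmx_mul IH mulmxE; congr (_ + _).
by have := comm_horner_mx2 A^T 'X p; rewrite horner_mx_X.
Qed.

Lemma rank1_sup m1 m2 (X : 'M[K]_(m1, n.+1)) (Y : 'M[K]_(m2, n.+1)) :
  (X <= Y)%MS -> (\rank Y <= 1)%N -> X != 0 -> (Y <= X)%MS.
Proof.
move=> sXY rY nzX; rewrite -(geq_leqif (mxrank_leqif_sup sXY)).
by apply: leq_trans rY _; rewrite lt0n mxrank_eq0.
Qed.

Lemma rank_sumsmx_le (I : finType) (P : pred I) (B : I -> M) :
  (\rank (\sum_(i | P i) B i)%MS <= \sum_(i | P i) \rank (B i))%N.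
Proof. exact: (mxrank_sum_leqif _).1. Qed.

Lemma col_mulmx_rV0 (y : 'cV[K]_n.+1) (w : 'rV[K]_n.+1) : y *m w = 0 -> w != 0 -> y = 0.
Proof.
move=> yw0 /rV0Pn[k wk]; apply/matrixP => i j; rewrite (ord1 j) mxE.
have /eqP := congr1 (fun N : M => N i k) yw0.
by rewrite !mxE big_ord1 mulf_eq0 (negbTE wk) orbF => /eqP.
Qed.

Lemma subr_submx m1 m2 (X Y : 'M[K]_(m1, n.+1)) (Z : 'M[K]_(m2, n.+1)) :
  (X <= Z)%MS -> (Y <= Z)%MS -> (X - Y <= Z)%MS.
Proof. by move=> sX sY; rewrite addmx_sub // -scaleN1r scalemx_sub. Qed.

Lemma submx_mulmx_shift m1 m2 (X : 'M[K]_(m1, n.+1)) (Y : 'M[K]_(m2, n.+1)) (a : M) c :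
  (X *m (a - c%:M) <= Y)%MS -> (X <= Y)%MS -> (X *m a <= Y)%MS.
Proof.
move=> sXa sX; have -> : X *m a = X *m (a - c%:M) + c *: X.
  by rewrite mulmxBr mul_mx_scalar subrK.
by rewrite addmx_sub // scalemx_sub.
Qed.

End MatrixFacts.

Lemma ord_leq d (j : 'I_d.+1) : (j <= d)%N.
Proof. by rewrite -ltnS ltn_ord. Qed.

Section PrimIdem.
Variables (K : fieldType) (d : nat).
Local Notation M := 'M[K]_(d.+1).

Lemma prim_idem_horner (A : M) th i : prim_idem A th i =
  horner_mx A (\prod_(j < d.+1 | (j : nat) != i) ((th i - th j)^-1 *: ('X - (th j)%:P))).
Proof.
rewrite rmorph_prod; apply: eq_bigr => j _.
by rewrite -mul_polyC rmorphM /= horner_mx_C horner_mx_XsubC -mulmxE mul_scalar_mx.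
Qed.

Lemma comm_prim_idem (A : M) th i p : GRing.comm (horner_mx A p) (prim_idem A th i).
Proof. by rewrite prim_idem_horner; apply: comm_horner_mx2. Qed.

Lemma trmx_prim_idem (A : M) th i : (prim_idem A th i)^T = prim_idem A^T th i.
Proof. by rewrite !prim_idem_horner trmx_horner_mx. Qed.

End PrimIdem.

Section Eigen.
Variables (K : fieldType) (d : nat) (a : 'M[K]_(d.+1)) (th : nat -> K).
Hypothesis Hth : eig_ordering a th.
Local Notation E := (prim_idem a th).
Local Notation ev j := (eigenspace a (th j)).

Let th_inj i j : (i <= d)%N -> (j <= d)%N -> th i = th j -> i = j.
Proof. exact: Hth.1. Qed.

Let eig_inj : {in predT &, injective (fun i : 'I_d.+1 => th i)}.
Proof. by move=> i l _ _ /= /th_inj eq_il; apply/val_inj/eq_il; apply: ord_leq. Qed.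

Lemma eigenspace_mulmx_prim_idem m (W : 'M_(m, d.+1)) k j :
  (k <= d)%N -> (j <= d)%N -> (W <= ev k)%MS -> W *m E j = (k == j)%:R *: W.
Proof.
move=> hk hj /eigenspaceP Wa.
rewrite (mulmx_prod_eigen _
  (s := fun l : 'I_d.+1 => (th j - th l)^-1 * (th k - th l))); last first.
  by move=> l _; rewrite -scalemxAr mulmxBr Wa mul_mx_scalar -scalerBl scalerA.
case: (eqVneq k j) => [<-|nkj].
  rewrite big1 ?scale1r // => l nl; rewrite mulVf // subr_eq0; apply/eqP => thkl.
  by move/eqP: nl; apply; apply: th_inj => //; rewrite -ltnS.
by rewrite (bigD1 (Ordinal (hk : (k < d.+1)%N))) //= subrr mulr0 mul0r scale0r.
Qed.

Lemma rank_eigenspace j : (j <= d)%N -> \rank (ev j) = 1%N.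
Proof.
move=> hj; set j' := Ordinal (hj : (j < d.+1)%N).
have ev_pos i : (i <= d)%N -> (0 < \rank (ev i))%N.
  by move=> hi; rewrite lt0n mxrank_eq0; apply: Hth.2.
have := rank_leq_col (\sum_(i < d.+1) ev i)%MS.
rewrite (mxdirectP (mxdirect_sum_eigenspace a eig_inj)) /= (bigD1 j') //=.
have : (d <= \sum_(i < d.+1 | i != j') \rank (ev i))%N.
  rewrite -[X in (X <= _)%N](sum1_neq j').
  by apply: leq_sum => i _; apply/ev_pos/ord_leq.
move=> ge le; apply/eqP; rewrite eqn_leq ev_pos // andbT -(leq_add2r d).
exact: leq_trans (leq_add (leqnn _) ge) le.
Qed.

Lemma mulmx_prim_idem_decomp (v : 'rV[K]_(d.+1)) w (j : 'I_d.+1) :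
  v = \sum_(i < d.+1) w i *m ev i -> v *m E j = w j *m ev j.
Proof.
move=> ->; rewrite mulmx_suml (bigD1 j) //= big1 ?addr0 => [|i nij].
  by rewrite (eigenspace_mulmx_prim_idem _ _ (submxMl _ _)) ?ord_leq // eqxx scale1r.
rewrite (eigenspace_mulmx_prim_idem (ord_leq i) (ord_leq j) (submxMl _ _)).
by rewrite (inj_eq val_inj) (negbTE nij) scale0r.
Qed.

Lemma eigenspace_decomp (v : 'rV[K]_(d.+1)) :
  exists w : 'I_d.+1 -> 'rV_(d.+1), v = \sum_(i < d.+1) w i *m ev i.
Proof.
apply/sub_sumsmxP; apply: submx_trans (submx1 _) (submx_full _ _).
rewrite /row_full (mxdirectP (mxdirect_sum_eigenspace a eig_inj)) /=.
rewrite (eq_bigr (fun _ => 1%N)) => [|i _]; last by rewrite rank_eigenspace ?ord_leq.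
by rewrite sum1_card card_ord.
Qed.

Lemma sum_prim_idem : \sum_(j < d.+1) E j = 1%:M.
Proof.
apply: mx_eq_rV => v; rewrite mulmx1 mulmx_sumr.
have [w vw] := eigenspace_decomp v.
by rewrite [in RHS]vw; apply: eq_bigr => j _; apply: mulmx_prim_idem_decomp.
Qed.

Lemma prim_idem_sub_eigenspace (v : 'rV[K]_(d.+1)) j : (j <= d)%N -> (v *m E j <= ev j)%MS.
Proof.
move=> hj; have [w vw] := eigenspace_decomp v.
by rewrite (mulmx_prim_idem_decomp (Ordinal (hj : (j < d.+1)%N)) vw) submxMl.
Qed.

Lemma prim_idemMa j : (j <= d)%N -> E j *m a = th j *: E j.
Proof.
move=> hj; apply: mx_eq_rV => v; rewrite mulmxA -scalemxAr.
exact/eigenspaceP/prim_idem_sub_eigenspace.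
Qed.

Lemma mulmx_a_prim_idem j : (j <= d)%N -> a *m E j = th j *: E j.
Proof.
move=> hj; have := comm_prim_idem a th j 'X; rewrite horner_mx_X /GRing.comm -!mulmxE => ->.
exact: prim_idemMa.
Qed.

Lemma prim_idem_eigenspace j : (j <= d)%N -> (E j :=: ev j)%MS.
Proof.
move=> hj; apply/eqmxP/andP; split; first exact/eigenspaceP/prim_idemMa.
have := eigenspace_mulmx_prim_idem hj hj (submx_refl (ev j)).
by rewrite eqxx scale1r => <-; apply: submxMl.
Qed.

Lemma rank_prim_idem j : (j <= d)%N -> \rank (E j) = 1%N.
Proof. by move=> hj; rewrite (prim_idem_eigenspace hj) rank_eigenspace. Qed.

Lemma prim_idem_neq0 j : (j <= d)%N -> E j != 0.
Proof. by move=> hj; rewrite -mxrank_eq0 rank_prim_idem. Qed.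

End Eigen.

Section SplitDecomposition.
Variables (K : fieldType) (d : nat) (a b : 'M[K]_(d.+1)) (th ths : nat -> K).
Local Notation M := 'M[K]_(d.+1).
Local Notation E := (prim_idem a th).
Local Notation Es := (prim_idem b ths).

Definition lower_dual i := (\sum_(j < d.+1 | (j <= i)%N) Es j)%MS.
Definition upper i := (\sum_(j < d.+1 | (i <= j)%N) E j)%MS.
Definition split_space i := (lower_dual i :&: upper i)%MS.

Definition split_seq_rV (phi : nat -> K) := forall k, (1 <= k <= d)%N ->
  forall u : 'rV[K]_(d.+1), (u <= split_space k)%MS ->
  u *m (b - (ths k)%:M) *m (a - (th k.-1)%:M) = phi k *: u.

Fixpoint raise_seq (u0 : 'rV[K]_(d.+1)) k :=
  if k is k'.+1 then raise_seq u0 k' *m (a - (th k')%:M) else u0.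

Hypothesis HL : leonard_system a b th ths.

Let Hth : eig_ordering a th. Proof. by case: HL => [[]]. Qed.
Let Hths : eig_ordering b ths. Proof. by case: HL => [[]]. Qed.

Let E_b_E i j : (i <= d)%N -> (j <= d)%N -> ((j.+1 < i)%N || (i.+1 < j)%N) ->
  E i *m b *m E j = 0.
Proof. by case: HL => _ H _ _ _; apply: H. Qed.

Let E_b_E_neq0 i j : (i <= d)%N -> (j <= d)%N -> ((j.+1 == i) || (i.+1 == j)) ->
  E i *m b *m E j != 0.
Proof. by case: HL => _ _ H _ _; apply: H. Qed.

Let Es_a_Es i j : (i <= d)%N -> (j <= d)%N -> ((j.+1 < i)%N || (i.+1 < j)%N) ->
  Es i *m a *m Es j = 0.
Proof. by case: HL => _ _ _ H _; apply: H. Qed.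

Lemma lower_dual_mono i k : (i <= k)%N -> (lower_dual i <= lower_dual k)%MS.
Proof.
by move=> hik; apply/sumsmx_subP => j hj; apply: (sumsmx_sup j) => //; apply: leq_trans hik.
Qed.

Lemma upper_anti i k : (i <= k)%N -> (upper k <= upper i)%MS.
Proof.
by move=> hik; apply/sumsmx_subP => j hj; apply: (sumsmx_sup j) => //; apply: leq_trans hj.
Qed.

Lemma dual_prim_idem_lower j i : (j <= i)%N -> (j <= d)%N -> (Es j <= lower_dual i)%MS.
Proof. by move=> hji hj; apply: (sumsmx_sup (Ordinal (hj : (j < d.+1)%N))). Qed.

Lemma prim_idem_upper j i : (i <= j)%N -> (j <= d)%N -> (E j <= upper i)%MS.
Proof. by move=> hij hj; apply: (sumsmx_sup (Ordinal (hj : (j < d.+1)%N))). Qed.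

Lemma upper_out : upper d.+1 = 0.
Proof. by apply: big_pred0 => j /=; rewrite ltnNge ord_leq. Qed.

Lemma split_space_out k : (d < k)%N -> split_space k = 0.
Proof.
move=> hk; apply/eqP; rewrite -submx0 -upper_out.
exact: submx_trans (capmxSr _ _) (upper_anti hk).
Qed.

Lemma prim_idemMb j : (j <= d)%N -> (E j *m b <= upper j.-1)%MS.
Proof.
move=> hj; rewrite -[E j *m b]mulmx1 -(sum_prim_idem Hth) mulmx_sumr.
apply: summx_sub => k _; case: (leqP j.-1 k) => hk.
  exact: submx_trans (submxMl _ _) (prim_idem_upper hk (ord_leq k)).
by rewrite E_b_E ?ord_leq ?sub0mx // -ltn_predRL hk.
Qed.

Lemma dual_prim_idemMa j : (j <= d)%N -> (Es j *m a <= lower_dual j.+1)%MS.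
Proof.
move=> hj; rewrite -[Es j *m a]mulmx1 -(sum_prim_idem Hths) mulmx_sumr.
apply: summx_sub => k _; case: (leqP k j.+1) => hk.
  exact: submx_trans (submxMl _ _) (dual_prim_idem_lower hk (ord_leq k)).
by rewrite Es_a_Es ?ord_leq ?sub0mx ?hk ?orbT.
Qed.

Lemma upper_raise i : (upper i *m (a - (th i)%:M) <= upper i.+1)%MS.
Proof.
rewrite sumsmxMr; apply/sumsmx_subP => j hij.
rewrite mulmxBr (prim_idemMa Hth (ord_leq j)) mul_mx_scalar -scalerBl.
case: (eqVneq (j : nat) i) => [->|nji]; first by rewrite subrr scale0r sub0mx.
by apply/scalemx_sub/prim_idem_upper/ord_leq; rewrite ltn_neqAle eq_sym nji.
Qed.

Lemma lower_dual_raise i c : (lower_dual i *m (a - c%:M) <= lower_dual i.+1)%MS.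
Proof.
rewrite mulmxBr mul_mx_scalar; apply: subr_submx.
  rewrite sumsmxMr; apply/sumsmx_subP => j hij.
  exact: submx_trans (dual_prim_idemMa (ord_leq j)) (lower_dual_mono _).
exact: scalemx_sub (lower_dual_mono (leqnSn i)).
Qed.

Lemma lower_dual_descend i : (lower_dual i *m (b - (ths i)%:M) <= lower_dual i.-1)%MS.
Proof.
rewrite sumsmxMr; apply/sumsmx_subP => j hji.
rewrite mulmxBr (prim_idemMa Hths (ord_leq j)) mul_mx_scalar -scalerBl.
case: (eqVneq (j : nat) i) => [->|nji]; first by rewrite subrr scale0r sub0mx.
apply/scalemx_sub/dual_prim_idem_lower/ord_leq.
by rewrite -ltnS (leq_trans _ (leqSpred i)) // ltn_neqAle nji.
Qed.

Lemma upper_descend i : (upper i *m (b - (ths i)%:M) <= upper i.-1)%MS.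
Proof.
rewrite mulmxBr mul_mx_scalar; apply: subr_submx.
  rewrite sumsmxMr; apply/sumsmx_subP => j hij.
  by apply: submx_trans (prim_idemMb (ord_leq j)) (upper_anti _); rewrite -!subn1 leq_sub2r.
exact/scalemx_sub/upper_anti/leq_pred.
Qed.

Lemma split_space_raise i : (split_space i *m (a - (th i)%:M) <= split_space i.+1)%MS.
Proof.
rewrite sub_capmx (submx_trans (submxMr _ (capmxSl _ _)) (lower_dual_raise _ _)).
exact: submx_trans (submxMr _ (capmxSr _ _)) (upper_raise i).
Qed.

Lemma split_space_descend i : (split_space i *m (b - (ths i)%:M) <= split_space i.-1)%MS.
Proof.
rewrite sub_capmx (submx_trans (submxMr _ (capmxSl _ _)) (lower_dual_descend i)).
exact: submx_trans (submxMr _ (capmxSr _ _)) (upper_descend i).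
Qed.

Lemma dual_prim_idem0_split_space : (Es 0%N <= split_space 0%N)%MS.
Proof.
rewrite sub_capmx dual_prim_idem_lower //=; apply: submx_trans (submx1 _) _.
by rewrite -(sum_prim_idem Hth); apply: summx_sub => j _; apply: prim_idem_upper (ord_leq j).
Qed.

Lemma stable_prim_idem (W : M) j : stablemx W a -> stablemx W (E j).
Proof. by move=> Wa; rewrite prim_idem_horner; apply: horner_mx_stable. Qed.

Lemma leonard_irreducible (W : M) : stablemx W a -> stablemx W b -> W != 0 -> (1%:M <= W)%MS.
Proof.
move=> Wa Wb nzW.
have adj k l : (k <= d)%N -> (l <= d)%N -> ((k.+1 == l) || (l.+1 == k)) ->
    (E k <= W)%MS -> (E l <= W)%MS.
  move=> hk hl kl EkW; have nz : E k *m b *m E l != 0 by rewrite E_b_E_neq0 // orbC.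
  apply: submx_trans (rank1_sup (submxMl _ _) _ nz) _; first by rewrite rank_prim_idem.
  apply: submx_trans (stable_prim_idem l Wa).
  exact/submxMr/(submx_trans (submxMr _ EkW) Wb).
have E_W k : (k <= d)%N -> (E k <= W)%MS = (E 0%N <= W)%MS.
  elim: k => [//|k IH] hk; rewrite -(IH (ltnW hk)).
  by apply/idP/idP; apply: adj; rewrite ?eqxx ?orbT // ltnW.
have [j0 nzWE] : exists j0 : 'I_d.+1, W *m E j0 != 0.
  apply/existsP; apply: contraNT nzW => /existsPn WE0; apply/eqP.
  rewrite -[W]mulmx1 -(sum_prim_idem Hth) mulmx_sumr big1 // => j _.
  exact/eqP/negbNE/WE0.
have E0W : (E 0%N <= W)%MS.
  rewrite -(E_W _ (ord_leq j0)); apply: submx_trans (stable_prim_idem j0 Wa).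
  by apply: rank1_sup (submxMl _ _) _ nzWE; rewrite rank_prim_idem ?ord_leq.
rewrite -(sum_prim_idem Hth); apply: summx_sub => j _.
by rewrite E_W ?ord_leq.
Qed.

Lemma split_space_sub_sum (P : pred 'I_d.+1) k :
  (forall j : 'I_d.+1, (j : nat) = k -> P j) ->
  (split_space k <= \sum_(j | P j) split_space j)%MS.
Proof.
move=> Pk; case: (leqP k d) => hk; last by rewrite split_space_out // sub0mx.
by apply: (sumsmx_sup (Ordinal (hk : (k < d.+1)%N))) => //; apply: Pk.
Qed.

Lemma split_spaceMa_sum (P : pred 'I_d.+1) (i : 'I_d.+1) : P i ->
  (forall j : 'I_d.+1, (j : nat) = i.+1 -> P j) ->
  (split_space i *m a <= \sum_(j | P j) split_space j)%MS.
Proof.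
move=> Pi Psucc; apply: (submx_mulmx_shift (c := th i)).
  exact: submx_trans (split_space_raise i) (split_space_sub_sum Psucc).
by apply: split_space_sub_sum => j /val_inj ->.
Qed.

Lemma split_spaceMb_sum (P : pred 'I_d.+1) (i : 'I_d.+1) : P i ->
  (forall j : 'I_d.+1, (j : nat) = i.-1 -> P j) ->
  (split_space i *m b <= \sum_(j | P j) split_space j)%MS.
Proof.
move=> Pi Ppred; apply: (submx_mulmx_shift (c := ths i)).
  exact: submx_trans (split_space_descend i) (split_space_sub_sum Ppred).
by apply: split_space_sub_sum => j /val_inj ->.
Qed.

Lemma sum_split_space_full : (1%:M <= \sum_(i < d.+1) split_space i)%MS.
Proof.
apply: leonard_irreducible.
- by rewrite sumsmxMr; apply/sumsmx_subP => i _; apply: split_spaceMa_sum.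
- by rewrite sumsmxMr; apply/sumsmx_subP => i _; apply: split_spaceMb_sum.
apply: contraNneq (prim_idem_neq0 Hths (leq0n d)) => sum0.
rewrite -submx0 -sum0; apply: submx_trans dual_prim_idem0_split_space _.
exact: (sumsmx_sup ord0).
Qed.

Lemma lower_dual_cap_upper i : \rank (lower_dual i :&: upper i.+1)%MS = 0%N.
Proof.
have full : (1%:M <= lower_dual i + upper i.+1)%MS.
  apply: submx_trans sum_split_space_full _; apply/sumsmx_subP => k _.
  case: (leqP k i) => hk.
    exact: submx_trans (capmxSl _ _) (submx_trans (lower_dual_mono hk) (addsmxSl _ _)).
  exact: submx_trans (capmxSr _ _) (submx_trans (upper_anti hk) (addsmxSr _ _)).
have rank_sum : \rank (lower_dual i + upper i.+1)%MS = d.+1.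
  by apply/eqP; rewrite eqn_leq rank_leq_col -{1}(mxrank1 K d.+1) mxrankS.
have rank_le : (\rank (lower_dual i) + \rank (upper i.+1) <= d.+1)%N.
  rewrite -[X in (_ <= X)%N](sum1_split d.+1 i).
  apply: leq_add; apply: leq_trans (rank_sumsmx_le _ _) _; apply: leq_sum => j _;
    by rewrite rank_prim_idem ?ord_leq.
have := mxrank_sum_cap (lower_dual i) (upper i.+1); rewrite rank_sum => rank_eq.
by apply/eqP; rewrite -(eqn_add2l d.+1) addn0 eqn_leq leq_addr rank_eq rank_le.
Qed.

Lemma lower_dualS k : (lower_dual k.+1 <= lower_dual k + Es k.+1)%MS.
Proof.
apply/sumsmx_subP => j hj; case: (leqP j k) => hjk.
  exact: submx_trans (dual_prim_idem_lower hjk (ord_leq j)) (addsmxSl _ _).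
by rewrite (_ : j = k.+1 :> nat) ?addsmxSr //; apply/eqP; rewrite eqn_leq hj hjk.
Qed.

Lemma rank_split_space_le1 i : (\rank (split_space i) <= 1)%N.
Proof.
case: i => [|k].
  rewrite -(rank_prim_idem Hths (leq0n d)) mxrankS //.
  by apply: submx_trans (capmxSl _ _) _; apply/sumsmx_subP => j; rewrite leqn0 => /eqP ->.
case: (leqP k.+1 d) => hk; last by rewrite split_space_out // mxrank0.
have cap0 : \rank (split_space k.+1 :&: lower_dual k)%MS = 0%N.
  apply/eqP; rewrite -leqn0 -(lower_dual_cap_upper k) mxrankS //.
  by rewrite sub_capmx capmxSr (submx_trans (capmxSl _ _) (capmxSr _ _)).
have := mxrank_sum_cap (split_space k.+1) (lower_dual k); rewrite cap0 addn0 => rank_eq.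
have : (\rank (split_space k.+1 + lower_dual k)%MS <= \rank (lower_dual k) + 1)%N.
  rewrite -(rank_prim_idem Hths hk); apply: leq_trans (mxrank_adds_leqif _ _).1.
  by rewrite mxrankS // addsmx_sub (submx_trans (capmxSl _ _) (lower_dualS k)) addsmxSl.
by rewrite rank_eq addnC leq_add2l.
Qed.

Lemma rank_split_space i : (i <= d)%N -> \rank (split_space i) = 1%N.
Proof.
move=> hi; set i' := Ordinal (hi : (i < d.+1)%N).
apply/eqP; rewrite eqn_leq rank_split_space_le1 /=.
have := leq_trans (mxrankS sum_split_space_full) (rank_sumsmx_le _ _).
rewrite mxrank1 (bigD1 i') //= => le_sum.
have : (\sum_(j < d.+1 | j != i') \rank (split_space j) <= d)%N.
  rewrite -[X in (_ <= X)%N](sum1_neq i'); apply: leq_sum => j _; exact: rank_split_space_le1.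
move/(leq_add (leqnn (\rank (split_space i))))/(leq_trans le_sum) => le.
by rewrite -(leq_add2r d) add1n.
Qed.

Lemma split_sum_not_stable (P : pred 'I_d.+1) (j0 j1 : 'I_d.+1) : P j0 -> ~~ P j1 ->
  stablemx (\sum_(j | P j) split_space j)%MS a ->
  ~ stablemx (\sum_(j | P j) split_space j)%MS b.
Proof.
move=> Pj0 nPj1 Sa Sb; have : (\sum_(j | P j) split_space j)%MS != 0.
  have := sumsmx_sup j0 (B_ := fun j : 'I_d.+1 => split_space j) Pj0 (submx_refl _).
  apply: contraTneq => ->.
  by rewrite submx0 -mxrank_eq0 rank_split_space ?ord_leq.
move=> /(leonard_irreducible Sa Sb)/mxrankS; rewrite mxrank1 => full.
have := leq_trans full (rank_sumsmx_le _ _).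
have : (\sum_(j | P j) \rank (split_space j) <= d)%N.
  by apply: leq_trans (sum1_pred_le nPj1); apply: leq_sum => j _; apply: rank_split_space_le1.
by move/(leq_trans _) => le /le; rewrite ltnn.
Qed.

Section RaisingSeq.
Variable u0 : 'rV[K]_(d.+1).
Hypotheses (u0_Es0 : (u0 <= Es 0%N)%MS) (u0_neq0 : u0 != 0).
Local Notation u := (raise_seq u0).

Lemma raise_seq_split k : (u k <= split_space k)%MS.
Proof.
elim: k => [|k IH] /=; first exact: submx_trans u0_Es0 dual_prim_idem0_split_space.
exact: submx_trans (submxMr _ IH) (split_space_raise k).
Qed.

Lemma raise_seq_out : u d.+1 = 0.
Proof. by apply/eqP; rewrite -submx0 -(split_space_out (ltnSn d)) raise_seq_split. Qed.

Lemma split_space_raise_seq k : (k <= d)%N -> u k != 0 -> (split_space k <= u k)%MS.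
Proof. by move=> hk; apply: rank1_sup (raise_seq_split k) (rank_split_space_le1 k). Qed.

Lemma split_space_stable k (c : 'M[K]_(d.+1)) (s : K) : (k <= d)%N -> u k != 0 ->
  u k *m c = s *: u k -> stablemx (split_space k) c.
Proof.
move=> hk nz uc; have [D ->] := submxP (split_space_raise_seq hk nz).
by rewrite -mulmxA uc -scalemxAr scalemx_sub.
Qed.

Lemma raise_seq_neq0 k : (k <= d)%N -> u k != 0.
Proof.
elim: k => [//|k IH] hk; have nzk := IH (ltnW hk).
apply/negP => /eqP uk0.
have uka : u k *m a = th k *: u k.
  by apply/eqP; rewrite -subr_eq0 -mul_mx_scalar -mulmxBr; apply/eqP; exact: uk0.
(* Then U_0 + ... + U_k is a proper subspace stable under a and b. *)
apply: (@split_sum_not_stable (fun j : 'I_d.+1 => (j <= k)%N) ord0 ord_max) => //=.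
- by rewrite -ltnNge.
- rewrite sumsmxMr; apply/sumsmx_subP => j /= hj.
  case: (eqVneq (j : nat) k) => [ejk|njk].
    rewrite ejk; apply: submx_trans (split_space_stable (ltnW hk) nzk uka) _.
    by apply: split_space_sub_sum => l ->.
  by apply: (split_spaceMa_sum hj) => l ->; rewrite ltn_neqAle njk hj.
- rewrite sumsmxMr; apply/sumsmx_subP => j /= hj.
  by apply: (split_spaceMb_sum hj) => l ->; apply: leq_trans (leq_pred _) hj.
Qed.

Lemma raise_seq0Mb : u 0%N *m (b - (ths 0%N)%:M) = 0.
Proof.
have /eigenspaceP u0b : (u0 <= eigenspace b (ths 0%N))%MS.
  by rewrite -(prim_idem_eigenspace Hths (leq0n d)).
by rewrite mulmxBr u0b mul_mx_scalar subrr.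
Qed.

Variable phi : nat -> K.
Hypothesis Hphi : split_seq_rV phi.

Lemma raise_seqMb k : (1 <= k <= d)%N ->
  u k *m (b - (ths k)%:M) = phi k *: u k.-1.
Proof.
move=> hk; case/andP: (hk) => hk1 hkd.
have hk' : (k.-1 <= d)%N := leq_trans (leq_pred _) hkd.
have [D uD] : exists D, u k *m (b - (ths k)%:M) = D *: u k.-1.
  have /submxP[D ->] : (u k *m (b - (ths k)%:M) <= u k.-1)%MS.
    apply: submx_trans (submxMr _ (raise_seq_split k)) _.
    exact: submx_trans (split_space_descend k) (split_space_raise_seq hk' (raise_seq_neq0 hk')).
  by exists (D 0 0); rewrite {1}(mx11_scalar D) mul_scalar_mx.
have uk : u k.-1 *m (a - (th k.-1)%:M) = u k by rewrite -[in RHS](prednK hk1).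
have := Hphi hk (raise_seq_split k); rewrite uD -scalemxAl uk.
move/eqP; rewrite -subr_eq0 -scalerBl scalemx_eq0 (negbTE (raise_seq_neq0 hkd)) orbF.
by rewrite subr_eq0 => /eqP ->.
Qed.

Lemma split_seq_neq0 k : (1 <= k <= d)%N -> phi k != 0.
Proof.
move=> hk; case/andP: (hk) => hk1 hkd; apply/negP => /eqP phik0.
have ukb : u k *m b = ths k *: u k.
  by apply/eqP; rewrite -subr_eq0 -mul_mx_scalar -mulmxBr raise_seqMb // phik0 scale0r.
(* Then U_k + ... + U_d is a proper subspace stable under a and b. *)
apply: (@split_sum_not_stable (fun j : 'I_d.+1 => (k <= j)%N) ord_max ord0) => /=.
- exact: hkd.
- by rewrite -ltnNge.
- rewrite sumsmxMr; apply/sumsmx_subP => j /= hj.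
  by apply: (split_spaceMa_sum hj) => l ->; apply: leq_trans hj (leqnSn _).
- rewrite sumsmxMr; apply/sumsmx_subP => j /= hj.
  case: (eqVneq (j : nat) k) => [ejk|njk].
    rewrite ejk; apply: submx_trans (split_space_stable hkd (raise_seq_neq0 hkd) ukb) _.
    by apply: split_space_sub_sum => l ->.
  apply: (split_spaceMb_sum hj) => l ->.
  by rewrite -ltnS (ltn_predK (_ : k < j)%N) // ltn_neqAle eq_sym njk hj.
Qed.

End RaisingSeq.

End SplitDecomposition.

Section ProdReindex.
Variable R : comNzRingType.

Lemma prod_ord_downto (g : nat -> R) m n : (m <= n)%N ->
  \prod_(h < n - m) g (n - h)%N = \prod_(m.+1 <= h < n.+1) g h.
Proof.
elim: n => [|n IH] hmn.
  by move: hmn; rewrite leqn0 => /eqP ->; rewrite big_ord0 big_geq.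
case: (leqP m n) => h.
  rewrite (subSn h) big_ord_recl big_nat_recr //= subn0 -IH // mulrC.
  by congr (_ * _); apply: eq_bigr => j _.
by rewrite (_ : m = n.+1) ?subnn ?big_ord0 ?big_geq //; apply/eqP; rewrite eqn_leq hmn h.
Qed.

Lemma prod_ord_neq (f : nat -> R) d i : (i <= d)%N ->
  \prod_(j < d.+1 | (j : nat) != i) f j = \prod_(h < i) f h * \prod_(h < d - i) f (d - h)%N.
Proof.
move=> hid; rewrite -(big_mkord (fun j => j != i) f).
rewrite (@big_cat_nat _ _ _ i 0 d.+1 _ _ (leq0n i) (leqW hid)) prod_ord_downto //.
congr (_ * _).
  by rewrite big_mkord; apply: eq_bigl => j; rewrite (ltn_eqF (ltn_ord j)).
rewrite big_ltn_cond ?ltnS // eqxx big_nat_cond [RHS]big_nat_cond.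
apply: eq_bigl => j; rewrite andbT; case: (ltnP i j) => //= hij.
by rewrite eq_sym (ltn_eqF hij) andbT.
Qed.

End ProdReindex.

Lemma tau_eta_prod (K : fieldType) d (ths : nat -> K) i x : (i <= d)%N ->
  tau_s ths i x * eta_s d ths (d - i) x = \prod_(j < d.+1 | (j : nat) != i) (x - ths j).
Proof. by move=> hi; rewrite (prod_ord_neq (fun j => x - ths j) hi). Qed.

Section Symmetries.
Variables (K : fieldType) (d : nat).
Local Notation M := 'M[K]_(d.+1).

Lemma prim_idem_factor (b : M) ths i : (i <= d)%N ->
  prim_idem b ths i = (\prod_(j < d.+1 | (j : nat) != i) (ths i - ths j)^-1) *:
    (\prod_(h < d - i) (b - (ths (d - h)%N)%:M) * \prod_(h < i) (b - (ths h)%:M)).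
Proof.
move=> hi; rewrite prim_idem_horner scaler_prod -mul_polyC rmorphM /= horner_mx_C.
rewrite -mulmxE mul_scalar_mx; congr (_ *: _).
rewrite (prod_ord_neq (fun j => 'X - (ths j)%:P) hi) mulrC rmorphM !rmorph_prod /=.
by congr (_ * _); apply: eq_bigr => h _; rewrite horner_mx_XsubC.
Qed.

Lemma prim_idem_rev (A : M) th i : (i <= d)%N ->
  prim_idem A (rev_seq d th) i = prim_idem A th (d - i).
Proof.
move=> hi; rewrite !prim_idem_horner; congr horner_mx.
rewrite (reindex_inj rev_ord_inj) /=; apply: eq_big => [j|j _]; rewrite /rev_seq /= subSS.
  by congr negb; apply/eqP/eqP; have := ord_leq j; lia.
by rewrite subKn ?ord_leq.
Qed.

Lemma eig_ordering_tr (A : M) th : eig_ordering A th -> eig_ordering A^T th.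
Proof.
case=> th_inj eig; split=> // i hi; have := eig i hi.
rewrite /eigenvalue /eigenspace -!mxrank_eq0 !mxrank_ker.
by rewrite -(mxrank_tr (A - _)) linearB /= tr_scalar_mx.
Qed.

Lemma eig_ordering_rev (A : M) th : eig_ordering A th -> eig_ordering A (rev_seq d th).
Proof.
case=> th_inj eig; split=> [i j hi hj /th_inj|i hi]; rewrite /rev_seq.
  by rewrite !leq_subr => /(_ isT isT) eq_ij; rewrite -(subKn hi) -(subKn hj) eq_ij.
exact/eig/leq_subr.
Qed.

Lemma leonard_system_tr (A As : M) th ths :
  leonard_system A As th ths -> leonard_system A^T As^T th ths.
Proof.
have trE (X Y : M) Z : X^T *m Y^T *m Z^T = (Z *m Y *m X)^T by rewrite !trmx_mul mulmxA.
case=> [[Hth Hths] far_E near_E far_Es near_Es].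
split; first by split; apply: eig_ordering_tr.
all: move=> i j hi hj ij; rewrite -!trmx_prim_idem trE.
- by rewrite far_E ?trmx0 // orbC.
- by rewrite trmx_eq0 near_E // orbC.
- by rewrite far_Es ?trmx0 // orbC.
- by rewrite trmx_eq0 near_Es // orbC.
Qed.

Lemma leonard_system_rev (A As : M) th ths :
  leonard_system A As th ths -> leonard_system A As (rev_seq d th) ths.
Proof.
case=> [[Hth Hths] far_E near_E far_Es near_Es].
split=> //; first by split=> //; apply: eig_ordering_rev.
- move=> i j hi hj ij; rewrite !prim_idem_rev //.
  by apply: far_E; rewrite ?leq_subr //; lia.
- move=> i j hi hj ij; rewrite !prim_idem_rev //; apply: near_E; rewrite ?leq_subr //.
  by move: ij => /orP[] /eqP ij; apply/orP; [right|left]; apply/eqP; lia.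
Qed.

Lemma first_split_seq_tr (A As : M) th ths phi :
  first_split_seq A As th ths phi -> split_seq_rV A^T As^T th ths phi.
Proof.
move=> Hphi k hk u; rewrite /split_space /lower_dual /upper.
rewrite -!(eq_bigr _ (fun j _ => trmx_prim_idem _ _ _)).
have trE : ((A - (th k.-1)%:M) *m (As - (ths k)%:M))^T =
    (As^T - (ths k)%:M) *m (A^T - (th k.-1)%:M).
  by rewrite trmx_mul !linearB /= !tr_scalar_mx.
by move=> /(Hphi k hk); rewrite trE mulmxA.
Qed.

End Symmetries.

Section TraceFormula.
Variables (K : fieldType) (d : nat) (a b : 'M[K]_(d.+1)) (th ths phi psi : nat -> K).
Hypothesis HL : leonard_system a b th ths.
Hypothesis Hphi : split_seq_rV a b th ths phi.
Hypothesis Hpsi : split_seq_rV a b (rev_seq d th) ths psi.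
Local Notation th' := (rev_seq d th).
Local Notation E := (prim_idem a th).
Local Notation Es := (prim_idem b ths).

Let HLr := leonard_system_rev HL.
Let Hth : eig_ordering a th. Proof. by case: HL => [[]]. Qed.
Let Hths : eig_ordering b ths. Proof. by case: HL => [[]]. Qed.

Lemma dual_dist_neq0 i : (i <= d)%N -> tau_s ths i (ths i) * eta_s d ths (d - i) (ths i) != 0.
Proof.
move=> hi; rewrite tau_eta_prod //; apply/prodf_neq0 => j nji.
by rewrite subr_eq0; apply: contra nji => /eqP/Hths.1-> //; apply: ord_leq.
Qed.

Variable u0 : 'rV[K]_(d.+1).
Hypotheses (u0_Es0 : (u0 <= Es 0%N)%MS) (u0_neq0 : u0 != 0).
Local Notation u := (raise_seq a th u0).
Local Notation u' := (raise_seq a th' u0).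

Lemma psi_prod_neq0 m n : (1 <= m)%N -> (n <= d.+1)%N -> \prod_(m <= h < n) psi h != 0.
Proof.
move=> hm hn; rewrite prodf_seq_neq0; apply/allP => h; rewrite mem_index_iota => /andP[mh hn'].
apply: (split_seq_neq0 HLr u0_Es0 u0_neq0 Hpsi).
by rewrite (leq_trans hm mh) -ltnS (leq_trans hn').
Qed.

Lemma prim_idem0_sub_rev_top : (E 0%N <= u' d)%MS.
Proof.
have nz := raise_seq_neq0 HLr u0_Es0 u0_neq0 (leqnn d).
apply: rank1_sup _ _ nz; last by rewrite rank_prim_idem.
rewrite (prim_idem_eigenspace Hth (leq0n d)); apply/eigenspaceP.
have := raise_seq_out HLr u0_Es0; rewrite /= /rev_seq subnn.
by move/eqP; rewrite mulmxBr mul_mx_scalar subr_eq0 => /eqP.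
Qed.

Variable x : 'cV[K]_(d.+1).
Hypothesis E0_x : E 0%N = x *m u' d.

Definition tau_col k := \prod_(h < k) (b - (ths h)%:M) *m x.

Lemma a_col : a *m x = th 0%N *: x.
Proof.
apply/eqP; rewrite -subr_eq0; apply/eqP.
apply: col_mulmx_rV0 (raise_seq_neq0 HLr u0_Es0 u0_neq0 (leqnn d)).
by rewrite mulmxBl -mulmxA -E0_x -scalemxAl -E0_x (mulmx_a_prim_idem Hth (leq0n d)) subrr.
Qed.

Lemma raise_seq_col k : u k.+1 *m x = 0.
Proof.
have shift m c : u m *m (a - c%:M) *m x = (th 0%N - c) *: (u m *m x).
  by rewrite -mulmxA mulmxBl a_col mul_scalar_mx -scalerBl scalemxAr.
elim: k => [|k IH]; first by rewrite (shift 0%N) subrr scale0r.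
by rewrite (shift k.+1) IH scaler0.
Qed.

Lemma raise_seqMb_sub m c : (m <= d)%N ->
  u m *m (b - c%:M) = (ths m - c) *: u m + (if m is m'.+1 then phi m *: u m' else 0).
Proof.
move=> hm; have -> : b - c%:M = (b - (ths m)%:M) + (ths m - c)%:M.
  by rewrite raddfB addrA subrK.
rewrite mulmxDr mul_mx_scalar addrC; congr (_ + _).
case: m hm => [|m] hm; first exact: (raise_seq0Mb HL u0_Es0).
exact: (raise_seqMb HL u0_Es0 u0_neq0 Hphi (hm : (1 <= m.+1 <= d)%N)).
Qed.

Lemma tau_colS k : tau_col k.+1 = (b - (ths k)%:M) *m tau_col k.
Proof.
have comm_lin c c' : GRing.comm (b - c%:M) (b - c'%:M).
  by rewrite -!horner_mx_XsubC; apply: comm_horner_mx2.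
rewrite /tau_col big_ord_recr /=.
have -> : (\prod_(h < k) (b - (ths h)%:M)) * (b - (ths k)%:M) =
    (b - (ths k)%:M) * \prod_(h < k) (b - (ths h)%:M).
  by symmetry; apply: commr_prod => h _; apply: comm_lin.
by rewrite -mulmxE mulmxA.
Qed.

Lemma raise_seq_tau_col k m : (k <= d)%N -> (m <= d)%N ->
  u m *m tau_col k = if m == k then (\prod_(1 <= h < k.+1) phi h) *: (u0 *m x) else 0.
Proof.
elim: k m => [|k IH] m hk hm.
  rewrite /tau_col big_ord0 mul1mx.
  by case: m hm => [|m] hm; [rewrite big_geq // scale1r | apply: raise_seq_col].
rewrite tau_colS mulmxA (raise_seqMb_sub _ hm) mulmxDl -scalemxAl (IH m (ltnW hk) hm).
case: m hm => [|m] hm.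
  rewrite mul0mx addr0; case: (eqVneq 0%N k) => [<-|_]; first by rewrite subrr scale0r.
  by rewrite scaler0.
rewrite -scalemxAl (IH m (ltnW hk) (ltnW hm)) eqSS.
case: (eqVneq m k) => [->|_].
  by rewrite (gtn_eqF (ltnSn k)) scaler0 add0r scalerA [in RHS]big_nat_recr //= mulrC.
rewrite scaler0 addr0; case: (eqVneq m.+1 k) => [<-|_]; last by rewrite scaler0.
by rewrite subrr scale0r.
Qed.

Lemma rev_raise_seq_prod n : (n <= d)%N ->
  u' d *m \prod_(h < n) (b - (ths (d - h)%N)%:M) =
  (\prod_(h < n) psi (d - h)%N) *: u' (d - n)%N.
Proof.
elim: n => [|n IH] hn; first by rewrite !big_ord0 mulmx1 scale1r subn0.
rewrite !big_ord_recr /= -mulmxE mulmxA (IH (ltnW hn)) -scalemxAl.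
have hk : (1 <= d - n <= d)%N by rewrite subn_gt0 hn leq_subr.
by rewrite (raise_seqMb HLr u0_Es0 u0_neq0 Hpsi hk) scalerA subnS.
Qed.

Lemma dual_prim_idem_tau_col j k : (j <= d)%N ->
  Es j *m tau_col k = (\prod_(h < k) (ths j - ths h)) *: (Es j *m x).
Proof.
move=> hj; rewrite /tau_col mulmxA (mulmx_prod_eigen _ (s := fun h : 'I_k => ths j - ths h)).
  by rewrite scalemxAl.
by move=> h _; rewrite mulmxBr (prim_idemMa Hths hj) mul_mx_scalar -scalerBl.
Qed.

Lemma lower_dual_tau_col (v : 'rV[K]_(d.+1)) k : (0 < k)%N ->
  (v <= lower_dual b ths k.-1)%MS -> v *m tau_col k = 0.
Proof.
move=> hk /sub_sumsmxP[w ->]; rewrite mulmx_suml big1 // => j hj.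
have hjk : (j < k)%N by rewrite -(prednK hk) ltnS.
rewrite -mulmxA dual_prim_idem_tau_col ?ord_leq // (bigD1 (Ordinal hjk)) //=.
by rewrite subrr mul0r scale0r mulmx0.
Qed.

Lemma rev_raise_seq_sub k : (u' k.+1 - u k.+1 <= lower_dual b ths k)%MS.
Proof.
have diffE (X Y : 'rV[K]_(d.+1)) p q :
    X *m (a - p%:M) - Y *m (a - q%:M) = (X - Y) *m (a - p%:M) + (q - p) *: Y.
  have -> : a - q%:M = (a - p%:M) - (q - p)%:M by rewrite raddfB opprB addrA subrK.
  by rewrite [Y *m _]mulmxBr mul_mx_scalar opprB addrA mulmxBl addrAC.
elim: k => [|k IH].
  rewrite [u' _]/= [u _]/= diffE subrr mul0mx add0r scalemx_sub //.
  exact: submx_trans u0_Es0 (dual_prim_idem_lower _ _ (leqnn 0) (leq0n d)).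
rewrite [u' _]/= [u _]/= diffE addmx_sub ?scalemx_sub //.
  exact: submx_trans (submxMr _ IH) (lower_dual_raise HL _ _).
exact: submx_trans (raise_seq_split HL u0_Es0 k.+1) (capmxSl _ _).
Qed.

Lemma rev_raise_seq_tau_col k : u' k *m tau_col k = u k *m tau_col k.
Proof.
case: k => [//|k]; apply/eqP; rewrite -subr_eq0 -mulmxBl; apply/eqP.
exact: lower_dual_tau_col (ltn0Sn k) (rev_raise_seq_sub k).
Qed.

Lemma trace_dual_prim_idem i : (i <= d)%N ->
  \tr (Es i *m E 0%N) = (\prod_(j < d.+1 | (j : nat) != i) (ths i - ths j)^-1)
    * (\prod_(h < d - i) psi (d - h)%N) * (\prod_(1 <= h < i.+1) phi h) * (u0 *m x) 0 0.
Proof.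
move=> hi; rewrite E0_x mulmxA mxtrace_mulC trace_mx11.
have -> : Es i *m x = (\prod_(j < d.+1 | (j : nat) != i) (ths i - ths j)^-1) *:
    (\prod_(h < d - i) (b - (ths (d - h)%N)%:M) *m tau_col i).
  by rewrite (prim_idem_factor _ _ hi) -scalemxAl; congr (_ *: _); exact: esym (mulmxA _ _ _).
rewrite -scalemxAr mulmxA (rev_raise_seq_prod (leq_subr i d)) (subKn hi) -scalemxAl.
by rewrite rev_raise_seq_tau_col (raise_seq_tau_col hi hi) eqxx !mxE !mulrA.
Qed.

Lemma u0_col_neq0 : (u0 *m x) 0 0 != 0.
Proof.
apply/negP => /eqP s0.
have u0E0 : u0 *m E 0%N = 0.
  by rewrite E0_x mulmxA (mx11_scalar (u0 *m x)) s0 raddf0 mul0mx.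
have u0_upper : (u0 <= upper a th 1)%MS.
  rewrite -[u0]mulmx1 -(sum_prim_idem Hth) mulmx_sumr; apply: summx_sub => j _.
  case: (posnP j) => [->|hj]; first by rewrite u0E0 sub0mx.
  exact: submx_trans (submxMl _ _) (prim_idem_upper _ _ hj (ord_leq j)).
have u0_lower : (u0 <= lower_dual b ths 0)%MS.
  exact: submx_trans u0_Es0 (dual_prim_idem_lower _ _ (leqnn 0) (leq0n d)).
have : (u0 <= lower_dual b ths 0 :&: upper a th 1)%MS by rewrite sub_capmx u0_lower.
move/mxrankS; rewrite (lower_dual_cap_upper HL 0) leqn0 mxrank_eq0.
by rewrite (negbTE u0_neq0).
Qed.

Lemma trace_ratio_rV i : (i <= d)%N ->
  (\tr (Es 0%N *m E 0%N))^-1 * \tr (Es i *m E 0%N)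
  = (\prod_(1 <= h < i.+1) phi h) / (\prod_(1 <= h < i.+1) psi h)
    * (eta_s d ths d (ths 0%N) / (tau_s ths i (ths i) * eta_s d ths (d - i) (ths i))).
Proof.
move=> hi; rewrite (trace_dual_prim_idem hi) (trace_dual_prim_idem (leq0n d)).
have Ei : \prod_(j < d.+1 | (j : nat) != i) (ths i - ths j)^-1 =
    (tau_s ths i (ths i) * eta_s d ths (d - i) (ths i))^-1 by rewrite prodfV tau_eta_prod.
have E0 : \prod_(j < d.+1 | (j : nat) != 0%N) (ths 0%N - ths j)^-1 =
    (eta_s d ths d (ths 0%N))^-1.
  by rewrite prodfV -tau_eta_prod // /tau_s big_ord0 mul1r subn0.
have psi_split : \prod_(h < d - 0) psi (d - h)%N =
    (\prod_(1 <= h < i.+1) psi h) * \prod_(h < d - i) psi (d - h)%N.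
  by rewrite !prod_ord_downto // -big_cat_nat.
have eta0_neq0 : eta_s d ths d (ths 0%N) != 0.
  by have := dual_dist_neq0 (leq0n d); rewrite /tau_s big_ord0 mul1r subn0.
have psi_low : \prod_(1 <= h < i.+1) psi h != 0 by apply: psi_prod_neq0.
have psi_high : \prod_(h < d - i) psi (d - h)%N != 0.
  by rewrite prod_ord_downto //; apply: psi_prod_neq0.
rewrite Ei E0 psi_split [\prod_(1 <= h < 1) phi h]big_geq //.
have := dual_dist_neq0 hi; rewrite mulf_eq0 negb_or => /andP[tau_neq0 eta_neq0].
field.
have u0x_neq0 := u0_col_neq0.
by repeat (apply/andP; split).
Qed.

End TraceFormula.

Lemma leonard_trace_ratio_rV (K : fieldType) d (a b : 'M[K]_(d.+1))
    (th ths phi psi : nat -> K) i :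
  leonard_system a b th ths -> split_seq_rV a b th ths phi ->
  split_seq_rV a b (rev_seq d th) ths psi -> (i <= d)%N ->
  (\tr (prim_idem b ths 0 *m prim_idem a th 0))^-1
    * \tr (prim_idem b ths i *m prim_idem a th 0)
  = (\prod_(1 <= h < i.+1) phi h) / (\prod_(1 <= h < i.+1) psi h)
    * (eta_s d ths d (ths 0%N) / (tau_s ths i (ths i) * eta_s d ths (d - i) (ths i))).
Proof.
move=> HL Hphi Hpsi hi; have Hths : eig_ordering b ths by case: HL => [[]].
have [u0 u0_Es0 u0_neq0] := rowV0Pn (prim_idem_neq0 Hths (leq0n d)).
have [x E0_x] := submxP (prim_idem0_sub_rev_top HL u0_Es0 u0_neq0).
exact (trace_ratio_rV HL Hphi Hpsi u0_Es0 u0_neq0 E0_x hi).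
Qed.

Theorem theorem23p8 (K : fieldType) (d : nat) (A As : 'M[K]_(d.+1))
    (th ths phi psi : nat -> K) :
  leonard_system A As th ths ->
  first_split_seq A As th ths phi ->
  first_split_seq A As (rev_seq d th) ths psi ->
  forall i : nat, (i <= d)%N ->
    (\tr (prim_idem A th 0 *m prim_idem As ths 0))^-1
      * \tr (prim_idem As ths i *m prim_idem A th 0)
    = (\prod_(1 <= h < i.+1) phi h) / (\prod_(1 <= h < i.+1) psi h)
      * (eta_s d ths d (ths 0%N)
         / (tau_s ths i (ths i) * eta_s d ths (d - i) (ths i))).
Proof.
move=> HL Hphi Hpsi i hi.
have := leonard_trace_ratio_rV (leonard_system_tr HL) (first_split_seq_tr Hphi)
  (first_split_seq_tr Hpsi) hi.
by rewrite -!trmx_prim_idem -!trmx_mul !mxtrace_tr (mxtrace_mulC (prim_idem As ths i)).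
Qed.
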